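(* Let $i\ge1$ and consider a solution $x\in\mathbb{N}^n$ with $\|x\|_1\le 2^i$. Then there is a partition of $x$ into two solutions $x_1,x_2\in\mathbb{N}^n$ such that: (1) $\|x_1\|_1,\|x_2\|_1\le 2^{i-1}$ and $x=x_1+x_2$; (2) $|w(x_1)-\tfrac12 w(x)|\le 2\Delta$ and $|w(x_2)-\tfrac12 w(x)|\le 2\Delta$; (3) $|p(x_1)-\tfrac12 p(x)|\le 2\Delta$ and $|p(x_2)-\tfrac12 p(x)|\le 2\Delta$.
   Context: Fix items $(p_1,w_1),\dots,(p_n,w_n)$ with $p_k,w_k\in\mathbb{N}$. For $x\in\mathbb{N}^n$ (a multiset of items), $p(x)=\sum_k p_kx_k$, $w(x)=\sum_k w_kx_k$, $\|x\|_1=\sum_k x_k$. Let $p_{\max}=\max_k p_k$, $w_{\max}=\max_k w_k$ and $\Delta:=p_{\max}+w_{\max}$. *)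

From mathcomp Require Import all_boot all_order all_algebra.
Set Implicit Arguments. Unset Strict Implicit. Unset Printing Implicit Defensive.

(* Items (p_k, w_k), k < n, given as functions 'I_n -> nat.
   Multisets of items x : 'I_n -> nat. *)
Definition val_of (n : nat) (c : 'I_n -> nat) (x : 'I_n -> nat) : nat :=
  \sum_(k < n) c k * x k.

Definition norm1 (n : nat) (x : 'I_n -> nat) : nat := \sum_(k < n) x k.

Definition cmax (n : nat) (c : 'I_n -> nat) : nat := \max_(k < n) c k.

Definition Delta (n : nat) (p w : 'I_n -> nat) : nat := cmax p + cmax w.

From mathcomp Require Import all_boot all_order all_algebra.
From mathcomp Require Import lra zify.
Set Implicit Arguments. Unset Strict Implicit. Unset Printing Implicit Defensive.
Import Order.TTheory GRing.Theory Num.Theory.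

(* List the items of x sorted by profit and cut the list into consecutive
   pairs.  Sending the two items of each pair to opposite sides, the heavier
   one to the currently lighter side, keeps the two weights within w_max of
   each other.  As the list is sorted, the profit gaps of the pairs telescope,
   so whatever sides they go to, the two profits stay within 2 p_max of each
   other.  Each side receives half of the items, up to one. *)

Lemma greedy_balance (W x y a b : nat) :
  x <= y + W -> y <= x + W -> a <= W -> b <= W ->
  (x + a <= y + b + W /\ y + b <= x + a + W) \/
  (x + b <= y + a + W /\ y + a <= x + b + W).
Proof. lia. Qed.

Lemma perm_cons2_cat (T : eqType) (a b : T) (r r1 r2 : seq T) :
  perm_eq r (r1 ++ r2) ->
  perm_eq [:: a, b & r] ((a :: r1) ++ b :: r2) /\
  perm_eq [:: a, b & r] ((b :: r1) ++ a :: r2).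
Proof.
move=> perm_r; have perm_uv (u v : T) : perm_eq [:: u, v & r] ((u :: r1) ++ v :: r2).
  by rewrite /= perm_cons perm_sym -[v :: r2]cat1s perm_catCA /= perm_cons perm_sym.
split; first exact: perm_uv.
by rewrite -[[:: a, b & r]]/([:: a] ++ [:: b] ++ r) perm_catCA; apply: perm_uv.
Qed.

Section BalancedSplit.

Variables (T : eqType) (p w : T -> nat) (P W : nat).
Hypotheses (p_le : forall a, p a <= P) (w_le : forall a, w a <= W).

Let le_p a b := p a <= p b.

Let le_p_trans : transitive le_p.
Proof. by move=> b a c; apply: leq_trans. Qed.

(* The slack [2 * P - m] absorbs the telescoping profit gaps of the pairs,
   [m] being a lower bound for the profits in [s]. *)
Lemma balanced_split_from (m : nat) (s : seq T) :
  m <= P -> sorted le_p s -> all (fun a => m <= p a) s ->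
  exists s1 s2 : seq T,
    [/\ perm_eq s (s1 ++ s2), size s2 <= size s1 <= (size s2).+1,
        \sum_(a <- s1) w a <= \sum_(a <- s2) w a + W /\
        \sum_(a <- s2) w a <= \sum_(a <- s1) w a + W &
        \sum_(a <- s1) p a + m <= \sum_(a <- s2) p a + 2 * P /\
        \sum_(a <- s2) p a + m <= \sum_(a <- s1) p a + 2 * P].
Proof.
have [N] := ubnP (size s); elim: N s m => // N IH [|a [|b r]] m /= sizeN m_le.
- by move=> _ _; exists [::], [::]; rewrite !big_nil; split => //; lia.
- move=> _ /andP[m_pa _]; exists [:: a], [::]; rewrite !big_nil !big_seq1.
  by have := p_le a; have := w_le a; split => //; lia.
rewrite (path_sortedE le_p_trans) => /andP[pa_pb /andP[pb_r sorted_r]].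
move=> /and3P[m_pa _ _].
have [r1 [r2 [perm_r sizes [wr1 wr2] [pr1 pr2]]]] :=
  IH r (p b) (ltnSE (ltnW sizeN)) (p_le b) sorted_r pb_r.
have [perm_ab perm_ba] := perm_cons2_cat a b perm_r.
rewrite /le_p in pa_pb.
by case: (greedy_balance wr1 wr2 (w_le a) (w_le b)) => balance;
  [exists (a :: r1), (b :: r2) | exists (b :: r1), (a :: r2)];
  rewrite !big_cons /=; split => //; lia.
Qed.

Lemma balanced_split (s : seq T) :
  sorted le_p s ->
  exists s1 s2 : seq T,
    [/\ perm_eq s (s1 ++ s2), size s2 <= size s1 <= (size s2).+1,
        \sum_(a <- s1) w a <= \sum_(a <- s2) w a + W /\
        \sum_(a <- s2) w a <= \sum_(a <- s1) w a + W &
        \sum_(a <- s1) p a <= \sum_(a <- s2) p a + 2 * P /\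
        \sum_(a <- s2) p a <= \sum_(a <- s1) p a + 2 * P].
Proof.
move=> sorted_s; have [|s1 [s2 []]] := balanced_split_from (leq0n P) sorted_s.
  exact/allP.
by rewrite !addn0; exists s1, s2.
Qed.

End BalancedSplit.

Lemma sum_count_mem (T : finType) (c : T -> nat) (s : seq T) :
  \sum_(k : T) c k * count_mem k s = \sum_(a <- s) c a.
Proof.
elim: s => [|a s IH]; first by rewrite big_nil big1 // => k _; rewrite muln0.
rewrite big_cons -IH /=.
under eq_bigr => k _ do rewrite mulnDr.
rewrite big_split /= (bigD1 a) //= eqxx muln1 big1 ?addn0 // => k /negbTE.
by rewrite eq_sym => ->; rewrite muln0.
Qed.

Lemma val_of_count_mem n (c x : 'I_n -> nat) (s : seq 'I_n) :
  (forall k, x k = count_mem k s) -> val_of c x = \sum_(a <- s) c a.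
Proof. by move=> x_s; rewrite -sum_count_mem; apply: eq_bigr => k _; rewrite x_s. Qed.

Lemma norm1_count_mem n (x : 'I_n -> nat) (s : seq 'I_n) :
  (forall k, x k = count_mem k s) -> norm1 x = size s.
Proof.
move=> x_s; rewrite -sum1_size -sum_count_mem.
by apply: eq_bigr => k _; rewrite x_s mul1n.
Qed.

Lemma sorted_seq_of_multiplicities (T : finType) (le : rel T) (x : T -> nat) :
  total le -> exists s : seq T, sorted le s /\ forall k, x k = count_mem k s.
Proof.
move=> le_total; pose s := flatten [seq nseq (x j) j | j <- enum T].
exists (sort le s); split; first exact: sort_sorted.
move=> k; rewrite (permP (permEl (perm_sort le s))) count_flatten -map_comp.
rewrite sumnE big_map big_enum /= (bigD1 k) //= count_nseq /= eqxx mul1n.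
by rewrite big1 ?addn0 // => j /negbTE; rewrite count_nseq /= eq_sym => ->.
Qed.

Local Open Scope ring_scope.

Lemma dev_half_sum_le (R : realFieldType) (a1 a2 e d : nat) :
  (e <= 4 * d)%N -> (a1 <= a2 + e)%N -> (a2 <= a1 + e)%N ->
  `|a1%:R - (a1 + a2)%:R / 2| <= 2 * d%:R :> R /\
  `|a2%:R - (a1 + a2)%:R / 2| <= 2 * d%:R :> R.
Proof.
rewrite -!(ler_nat R) !natrD => le_e le12 le21.
by rewrite !ler_norml; split; apply/andP; split; lra.
Qed.

Theorem lemma3p3 (n : nat) (p w : 'I_n -> nat) (i : nat) (x : 'I_n -> nat) :
  (1 <= i)%N -> (norm1 x <= 2 ^ i)%N ->
  exists x1 x2 : 'I_n -> nat,
    ((norm1 x1 <= 2 ^ i.-1)%N /\ (norm1 x2 <= 2 ^ i.-1)%N /\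
      (forall k, x k = (x1 k + x2 k)%N)) /\
    (`|(val_of w x1)%:R - (val_of w x)%:R / 2| <= 2 * (Delta p w)%:R :> rat /\
     `|(val_of w x2)%:R - (val_of w x)%:R / 2| <= 2 * (Delta p w)%:R :> rat) /\
    (`|(val_of p x1)%:R - (val_of p x)%:R / 2| <= 2 * (Delta p w)%:R :> rat /\
     `|(val_of p x2)%:R - (val_of p x)%:R / 2| <= 2 * (Delta p w)%:R :> rat).
Proof.
move=> i_gt0 x_le.
have [s [sorted_s x_s]] :=
  sorted_seq_of_multiplicities x (fun a b => leq_total (p a) (p b)).
have p_le a : (p a <= cmax p)%N := leq_bigmax a.
have w_le a : (w a <= cmax w)%N := leq_bigmax a.
have [s1 [s2 [perm_s /andP[s21 s12] [w12 w21] [p12 p21]]]] :=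
  balanced_split p_le w_le sorted_s.
exists (fun k => count_mem k s1), (fun k => count_mem k s2).
have val_x c : val_of c x = (\sum_(a <- s1) c a + \sum_(a <- s2) c a)%N.
  by rewrite (val_of_count_mem c x_s) (perm_big _ perm_s) big_cat.
rewrite !val_x !(val_of_count_mem _ (fun k => erefl)).
have [size1 size2] : (size s1 <= 2 ^ i.-1)%N /\ (size s2 <= 2 ^ i.-1)%N.
  have : (size s1 + size s2 <= 2 * 2 ^ i.-1)%N.
    by rewrite -expnS prednK // -size_cat -(perm_size perm_s) -(norm1_count_mem x_s).
  by move: (2 ^ i.-1)%N => K; lia.
rewrite !(norm1_count_mem (fun k => erefl)).
split; first by split=> //; split=> // k; rewrite x_s (permP perm_s) count_cat.
by split; [apply: dev_half_sum_le w12 w21 | apply: dev_half_sum_le p12 p21];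
  rewrite /Delta; lia.
Qed.
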